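(* Let $\mathbf{A}$ be a non-trivial algebra whose set $\mathcal{F}$ of basic operations contains no constant symbols, and let $h$ be a unary function on $A$. Then the matrices $\langle\mathbf{A}^{\natural},F^{\natural}\rangle$ and $\langle\mathbf{A}^{\flat},G^{\flat}\rangle$ (defined below) are reduced.
   Context: A matrix $\langle\mathbf{B},H\rangle$ ($H\subseteq B$) is reduced if the largest congruence of $\mathbf{B}$ for which $H$ is a union of blocks is the identity. Construction of $\mathbf{A}^{\natural}$: its universe is the disjoint union of eight copies $A_1,\dots,A_8$ of $A$; for $a\in A$, $a^i$ denotes its copy in $A_i$. Its basic operations are those of $\mathcal{F}$ plus a ternary $\heartsuit$ and a unary $\Box$. For $n$-ary $f\in\mathcal{F}$: $f(a_1^{m_1},\dots,a_n^{m_n})=(f^{\mathbf{A}}(a_1,\dots,a_n))^5$. For $a^m,b^n,c^k$: $\heartsuit(a^m,b^n,c^k)=a^1$ if $a^m=c^k$, $h(a)^5=b^n$ and $m\in\{1,3,4\}$; $=a^2$ if $a^m=c^k$, $h(a)^5=b^n$ and $m\in\{2,5,6,7,8\}$; $=a^4$ if $m,k\in\{1,3,4\}$ and ($a^m\neq c^k$ or $h(a)^5\ne b^n$); $=a^7$ if $\{m,k\}\cap\{2,5,6,7,8\}\neq\emptyset$ and ($a^m\ne c^k$ or $h(a)^5\ne b^n$). $\Box(a^m)=a^m$ if $m\in\{1,2\}$; $=a^{m-1}$ if $m\ge3$ is even; $=a^{m+1}$ if $m\ge3$ is odd. $F^{\natural}=A_1\cup A_2$. Construction of $\mathbf{A}^{\flat}$: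 universe $A_1\cup A_2\cup\{0,1\}$ (two disjoint copies of $A$, with $a^i$ the copy of $a$ in $A_i$, plus two fresh elements $0,1$). Basic operations: those of $\mathcal{F}$, a binary $+$, a unary $\Box^{a}$ for each $a\in A$, and a constant $\mathbf{1}$ interpreted as $1$. For $n$-ary $f\in\mathcal{F}$: $f(b_1,\dots,b_n)=(f^{\mathbf{A}}(a_1,\dots,a_n))^2$ if $b_i\in\{a_i^1,a_i^2\}$ for all $i$; $=1$ if $b_1=\dots=b_n=1$; $=0$ otherwise. $a+b=1$ if either $a=b=1$ or ($a=c^1$ for some $c\in A$ and $b=h(c)^2$); $a+b=0$ otherwise. $\Box^{a}(b)=b$ if $b\in(A_1\cup A_2)\setminus\{a^1,a^2\}$; $\Box^a(a^1)=a^2$; $\Box^a(a^2)=a^1$; $\Box^a(0)=\Box^a(1)=0$. $G^{\flat}=A_1\cup\{1\}$. *)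

From mathcomp Require Import all_boot.
From Stdlib Require Import ClassicalEpsilon.

Set Implicit Arguments.
Unset Strict Implicit.
Unset Printing Implicit Defensive.

(* An algebra is a carrier B, a type S of operation symbols, an arity  *)
(* function ar : S -> nat and interpretations op s : B^(ar s) -> B.    *)
(* A matrix <B, H> is an algebra together with a subset H : B -> Prop. *)

Definition is_congruence (B S : Type) (ar : S -> nat)
  (op : forall s : S, ('I_(ar s) -> B) -> B) (th : B -> B -> Prop) : Prop :=
  [/\ (forall x, th x x),
      (forall x y, th x y -> th y x),
      (forall x y z, th x y -> th y z -> th x z) &
      (forall (s : S) (xs ys : 'I_(ar s) -> B),
          (forall i, th (xs i) (ys i)) -> th (op s xs) (op s ys))].

Definition union_of_blocks (B : Type) (th : B -> B -> Prop) (H : B -> Prop) : Prop :=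
  forall x y, th x y -> H x -> H y.

(* <B, H> is reduced: the largest congruence for which H is a union of
   blocks is the identity, i.e. every such congruence is contained in
   the identity relation (the identity itself always is one). *)
Definition reduced (B S : Type) (ar : S -> nat)
  (op : forall s : S, ('I_(ar s) -> B) -> B) (H : B -> Prop) : Prop :=
  forall th : B -> B -> Prop,
    is_congruence op th -> union_of_blocks th H -> forall x y, th x y -> x = y.

Definition dec (P : Prop) : bool :=
  if excluded_middle_informative P then true else false.

Inductive copy8 := C1 | C2 | C3 | C4 | C5 | C6 | C7 | C8.

(* element a^m of the disjoint union A_1 u ... u A_8 is the pair (a, m) *)
Definition nat_car (A : Type) := (A * copy8)%type.

Inductive nat_sym (F : Type) := NOp of F | NHeart | NBox.

Definition nat_ar (F : Type) (ar : F -> nat) (s : nat_sym F) : nat :=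
  match s with NOp f => ar f | NHeart => 3 | NBox => 1 end.

Definition grp134 (m : copy8) : bool :=
  match m with C1 | C3 | C4 => true | _ => false end.

Definition heart (A : Type) (h : A -> A) (x y z : nat_car A) : nat_car A :=
  let: (a, m) := x in
  let: (_, k) := z in
  if dec (x = z /\ (h a, C5) = y) then
    (if grp134 m then (a, C1) else (a, C2))
  else
    (if grp134 m && grp134 k then (a, C4) else (a, C7)).

Definition box_copy (m : copy8) : copy8 :=
  match m with
  | C1 => C1 | C2 => C2 | C3 => C4 | C4 => C3
  | C5 => C6 | C6 => C5 | C7 => C8 | C8 => C7
  end.

Definition nat_op (A F : Type) (ar : F -> nat) (op : forall f : F, ('I_(ar f) -> A) -> A)
  (h : A -> A) (s : nat_sym F) : ('I_(nat_ar ar s) -> nat_car A) -> nat_car A :=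
  match s return ('I_(nat_ar ar s) -> nat_car A) -> nat_car A with
  | NOp f => fun xs => (op f (fun i => (xs i).1), C5)
  | NHeart => fun xs => heart h (xs (@Ordinal 3 0 isT)) (xs (@Ordinal 3 1 isT))
                              (xs (@Ordinal 3 2 isT))
  | NBox => fun xs => let: (a, m) := xs (@Ordinal 1 0 isT) in (a, box_copy m)
  end.

Definition nat_filter (A : Type) (x : nat_car A) : Prop := x.2 = C1 \/ x.2 = C2.

(* L1 a = a^1, L2 a = a^2, Zero = 0, One = 1 *)
Inductive flat_car (A : Type) := L1 of A | L2 of A | Zero | One.

Inductive flat_sym (A F : Type) := FOp of F | FPlus | FBox of A | FOne.

Definition flat_ar (A F : Type) (ar : F -> nat) (s : flat_sym A F) : nat :=
  match s with FOp f => ar f | FPlus => 2 | FBox _ => 1 | FOne => 0 end.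

Definition flat_und (A : Type) (x : flat_car A) : option A :=
  match x with L1 a => Some a | L2 a => Some a | _ => None end.

Definition flat_fop (A : Type) (n : nat) (opf : ('I_n -> A) -> A)
  (xs : 'I_n -> flat_car A) : flat_car A :=
  match excluded_middle_informative
          (exists g : 'I_n -> A, forall i, flat_und (xs i) = Some (g i)) with
  | left H => L2 (opf (proj1_sig (constructive_indefinite_description _ H)))
  | right _ => if dec (forall i, xs i = One A) then One A else Zero A
  end.

Definition flat_plus (A : Type) (h : A -> A) (x y : flat_car A) : flat_car A :=
  if dec ((x = One A /\ y = One A) \/ (exists c, x = L1 c /\ y = L2 (h c)))
  then One A else Zero A.

Definition flat_box (A : Type) (a : A) (x : flat_car A) : flat_car A :=
  match x with
  | L1 c => if dec (c = a) then L2 c else L1 c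
  | L2 c => if dec (c = a) then L1 c else L2 c
  | Zero => Zero A
  | One => Zero A
  end.

Definition flat_op (A F : Type) (ar : F -> nat) (op : forall f : F, ('I_(ar f) -> A) -> A)
  (h : A -> A) (s : flat_sym A F) : ('I_(flat_ar ar s) -> flat_car A) -> flat_car A :=
  match s return ('I_(flat_ar ar s) -> flat_car A) -> flat_car A with
  | FOp f => fun xs => flat_fop (op f) xs
  | FPlus => fun xs => flat_plus h (xs (@Ordinal 2 0 isT)) (xs (@Ordinal 2 1 isT))
  | FBox a => fun xs => flat_box a (xs (@Ordinal 1 0 isT))
  | FOne => fun _ => One A
  end.

Definition flat_filter (A : Type) (x : flat_car A) : Prop :=
  (exists a, x = L1 a) \/ x = One A.

From mathcomp Require Import all_boot.
From Stdlib Require Import Classical ClassicalEpsilon.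

(* A congruence for which the filter H is a union of blocks cannot identify x
   and y once some unary polynomial p (here a basic translation) separates
   them, i.e. exactly one of p x, p y lies in H.  In A^natural the translation
   u |-> heart(u, h(x)^5, x) sends x into A_1 u A_2 and every other element
   into A_4 u A_7.  In A^flat every pair is separated by the identity, by some
   Box^a, or by u |-> u + 1 (which maps A_1 to 0 and 1 to 1). *)

Lemma decP (P : Prop) : reflect P (dec P).
Proof. by rewrite /dec; case: excluded_middle_informative => ?; constructor. Qed.

Section Separation.

Context {B S : Type} {ar : S -> nat} (op : forall s : S, ('I_(ar s) -> B) -> B).

Definition compatible (p : B -> B) : Prop :=
  forall th, is_congruence op th -> forall u v, th u v -> th (p u) (p v).

Definition translation (s : S) (i : 'I_(ar s)) (xs : 'I_(ar s) -> B) (u : B) :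
    B :=
  op s (fun j => if j == i then u else xs j).

Lemma compatible_id : compatible id.
Proof. by []. Qed.

Lemma compatible_translation s i xs : compatible (translation s i xs).
Proof.
move=> th [th_refl _ _ th_op] u v huv; apply: th_op => j.
by case: (j == i).
Qed.

Definition separable (H : B -> Prop) (x y : B) : Prop :=
  exists2 p, compatible p & ~ (H (p x) <-> H (p y)).

Lemma separable_by {H : B -> Prop} {p : B -> B} {x y : B} :
  compatible p -> H (p x) -> ~ H (p y) -> separable H x y.
Proof. by move=> p_comp Hpx nHpy; exists p => // -[/(_ Hpx)]. Qed.

Lemma separable_sym H x y : separable H x y -> separable H y x.
Proof. by case=> p p_comp sep; exists p => // -[? ?]; apply: sep. Qed.

Lemma reduced_of_separable (H : B -> Prop) :
  (forall x y, x <> y -> separable H x y) -> reduced op H.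
Proof.
move=> separating th th_cong th_blocks x y hxy.
apply: NNPP => /separating [p p_comp]; apply.
have [_ th_sym _ _] := th_cong.
by split; apply: th_blocks; apply: p_comp => //; apply: th_sym.
Qed.

End Separation.

Section Natural.

Variables (A F : Type) (ar : F -> nat) (op : forall f : F, ('I_(ar f) -> A) -> A).
Variable h : A -> A.

Lemma nat_filter_heart_self (x : nat_car A) :
  nat_filter (heart h x (h x.1, C5) x).
Proof.
case: x => a m; rewrite /heart; case: decP => [_ | []] //=.
by case: grp134; [left | right].
Qed.

Lemma nat_filter_heart_neq (x y z : nat_car A) :
  y <> x -> ~ nat_filter (heart h y z x).
Proof.
case: y => b k; case: x => a m neq_yx; rewrite /heart.
case: decP => [[eq_yx _] // | _].
by case: (_ && _); case.
Qed.

Lemma compatible_heart (y z : nat_car A) :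
  compatible (nat_op op h) (fun u => heart h u y z).
Proof.
exact (compatible_translation (nat_op op h) (NHeart F) ord0
          (fun i => if val i == 1 then y else z)).
Qed.

Lemma nat_separable (x y : nat_car A) :
  x <> y -> separable (nat_op op h) (@nat_filter A) x y.
Proof.
move=> neq_xy; apply: (separable_by _ (compatible_heart (h x.1, C5) x)).
  exact: nat_filter_heart_self.
by apply: nat_filter_heart_neq => eq_yx; apply: neq_xy.
Qed.

End Natural.

Section Flat.

Variables (A F : Type) (ar : F -> nat) (op : forall f : F, ('I_(ar f) -> A) -> A).
Variable h : A -> A.

Lemma flat_filter_L1 (a : A) : flat_filter (L1 a).
Proof. by left; exists a. Qed.

Lemma flat_filter_One : flat_filter (One A).
Proof. by right. Qed.

Lemma flat_filter_L2 (a : A) : ~ flat_filter (L2 a).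
Proof. by case=> [[]|]. Qed.

Lemma flat_filter_Zero : ~ flat_filter (Zero A).
Proof. by case=> [[]|]. Qed.

#[local] Hint Resolve flat_filter_L1 flat_filter_One : core.
#[local] Hint Resolve flat_filter_L2 flat_filter_Zero : core.

Lemma flat_box_L1_self (a : A) : flat_box a (L1 a) = L2 a.
Proof. by rewrite /=; case: decP. Qed.

Lemma flat_box_L2_self (a : A) : flat_box a (L2 a) = L1 a.
Proof. by rewrite /=; case: decP. Qed.

Lemma flat_box_L1_neq (a b : A) : b <> a -> flat_box a (L1 b) = L1 b.
Proof. by rewrite /=; case: decP. Qed.

Lemma flat_box_L2_neq (a b : A) : b <> a -> flat_box a (L2 b) = L2 b.
Proof. by rewrite /=; case: decP. Qed.

Lemma flat_plus_L1_One (a : A) : flat_plus h (L1 a) (One A) = Zero A.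
Proof. by rewrite /flat_plus; case: decP => [[[]|[c []]] | ]. Qed.

Lemma flat_plus_One_One : flat_plus h (One A) (One A) = One A.
Proof. by rewrite /flat_plus; case: decP => // -[]; left. Qed.

Lemma compatible_flat_box (a : A) : compatible (flat_op op h) (flat_box a).
Proof.
exact (compatible_translation (flat_op op h) (FBox F a) ord0 (fun _ => Zero A)).
Qed.

Lemma compatible_flat_plus_One : compatible (flat_op op h) (flat_plus h ^~ (One A)).
Proof.
exact (compatible_translation (flat_op op h) (FPlus A F) ord0 (fun _ => One A)).
Qed.

Lemma flat_separable (x y : flat_car A) :
  x <> y -> separable (flat_op op h) (@flat_filter A) x y.
Proof.
have by_id := separable_by _ (compatible_id (flat_op op h)).
have by_plus := separable_by _ compatible_flat_plus_One.
case: x => [a|a||]; case: y => [b|b||] neq_xy //.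
- apply/separable_sym/(separable_by _ (compatible_flat_box a)).
    by rewrite flat_box_L1_neq // => eq_ba; apply: neq_xy; rewrite eq_ba.
  by rewrite flat_box_L1_self.
- by apply: by_id.
- by apply: by_id.
- by apply/separable_sym/by_plus; rewrite ?flat_plus_One_One ?flat_plus_L1_One.
- by apply/separable_sym/by_id.
- apply: (separable_by _ (compatible_flat_box a)); first by rewrite flat_box_L2_self.
  by rewrite flat_box_L2_neq // => eq_ba; apply: neq_xy; rewrite eq_ba.
- by apply: (separable_by _ (compatible_flat_box a)); rewrite ?flat_box_L2_self.
- by apply/separable_sym/by_id.
- by apply/separable_sym/by_id.
- by apply/separable_sym/(separable_by _ (compatible_flat_box b));
    rewrite ?flat_box_L2_self.
- by apply/separable_sym/by_id.
- by apply: by_plus; rewrite ?flat_plus_One_One ?flat_plus_L1_One.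
- by apply: by_id.
- by apply: by_id.
Qed.

End Flat.

Theorem lemma4p1 (A F : Type) (ar : F -> nat)
  (op : forall f : F, ('I_(ar f) -> A) -> A)
  (nontriv : exists a b : A, a <> b)
  (noconst : forall f : F, 0 < ar f)
  (h : A -> A) :
  reduced (nat_op op h) (@nat_filter A) /\ reduced (flat_op op h) (@flat_filter A).
Proof.
split; apply: reduced_of_separable; [exact: nat_separable | exact: flat_separable].
Qed.
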